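(* Let $t_0\overset{i_1}{-}t_1\overset{i_2}{-}\cdots\overset{i_k}{-}t_k$ be a path in $\mathbb T_n$. For $1\le i\le k$ and $i\le m\le k$, $$q_{t_i}^{t_0}(\hat{\mathbf y}^{\mathbf c_m^+})=\hat{\mathbf y}^{\mathbf c_m^+}\prod_{j=1}^{i}L_j^{-(\hat{\mathbf c}_m^+,\,d_{(j)}\mathbf c_j)_{D_0R}},$$ where $q_{t_i}^{t_0}=q_{i_1;t_0}\circ q_{i_2;t_1}\circ\cdots\circ q_{i_i;t_{i-1}}$.
   Context: Notation: $n\ge1$; $[b]_+=\max(b,0)$. $\mathbb T_n$: $n$-regular tree with edges labeled $1,\dots,n$, distinct labels at each vertex; $t\overset{k}{-}t'$ an edge labeled $k$; $t_0$ root. Positive integers $r_1,\dots,r_n$, $R=\mathrm{diag}(r_i)$. Formal variables $y_1,\dots,y_n$, $z_{i,s}$ ($1\le s\le r_i-1$), $z_{i,s}=z_{i,r_i-s}$, $z_{i,0}=z_{i,r_i}=1$; $\mathbb P=\mathrm{Trop}(\mathbf y,\mathbf z)$; $\mathbb{QP}$ fraction field of $\mathbb{ZP}$; $\mathbb{QP}(\mathbf x)$ rational functions in $x_1,\dots,x_n$ over $\mathbb{QP}$. $B=(b_{ij})$ skew-symmetrizable integer; $\hat y_i=y_i\prod_jx_j^{b_{ji}}$, $\hat{\mathbf y}^{\mathbf a}=\prod\hat y_i^{a_i}$, $\mathbf x^{\mathbf m}=\prod x_i^{m_i}$. Matrices: $B_{t_0}=B$, $C_{t_0}=I_n$; for $t\overset{k}{-}t'$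 ($\varepsilon=\pm1$, independent): $b_{ij;t'}=-b_{ij;t}$ if $i=k$ or $j=k$, else $b_{ij;t}+r_k([-\varepsilon b_{ik;t}]_+b_{kj;t}+b_{ik;t}[\varepsilon b_{kj;t}]_+)$; $c_{ij;t'}=-c_{ij;t}$ if $j=k$, else $c_{ij;t}+r_k(c_{ik;t}[\varepsilon b_{kj;t}]_++[-\varepsilon c_{ik;t}]_+b_{kj;t})$. The columns $\mathbf c_{k;t}$ of $C_t$ are sign-coherent with sign $\varepsilon_{k;t}$, $\mathbf c_{k;t}^+=\varepsilon_{k;t}\mathbf c_{k;t}$. Form: $D_0$ positive integer diagonal with $D_0RB$ skew-symmetric, $D_0R=\mathrm{diag}(d_1^{-1},\dots,d_n^{-1})$, $(\mathbf u,\mathbf v)_{D_0R}=\mathbf u^TD_0R\mathbf v$. Maps: $q_{k;t}$ is the field automorphism of $\mathbb{QP}(\mathbf x)$ over $\mathbb{QP}$ with $\mathbf x^{\mathbf m}\mapsto\mathbf x^{\mathbf m}(\sum_{s=0}^{r_k}z_{k,s}(\hat{\mathbf y}^{\mathbf c_{k;t}^+})^s)^{-(\mathbf m,d_k\mathbf c_{k;t})_{D_0R}}$. Path data: $d_{(j)}=d_{i_j}$, $r_{(j)}=r_{i_j}$, $\mathbf c_j=\mathbf c_{i_j;t_{j-1}}$, $\mathbf c_j^+=\varepsilon_{i_j;t_{j-1}}\mathbf c_j$, $\hat{\mathbf c}_j^+=B\mathbf c_j^+$. $L_1=\sum_{s=0}^{r_{(1)}}z_{i_1,s}(\hat{\mathbf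 y}^{\mathbf c_1^+})^s$; for $2\le l\le k$, $L_l=\sum_{s=0}^{r_{(l)}}z_{i_l,s}\big(\hat{\mathbf y}^{\mathbf c_l^+}\prod_{j=1}^{l-1}L_j^{-(\hat{\mathbf c}_l^+,d_{(j)}\mathbf c_j)_{D_0R}}\big)^s$. *)

From HB Require Import structures.
From mathcomp Require Import all_boot all_order all_algebra.
From mathcomp Require Import fraction.
From mathcomp Require Import mpoly.
Set Implicit Arguments.
Unset Strict Implicit.
Unset Printing Implicit Defensive.
Import Order.TTheory GRing.Theory Num.Theory.
Local Open Scope ring_scope.

Section GenCluster.
(* n : rank; r : the integers r_i; D0 : the diagonal of D_0; B : initial
   exchange matrix; lab j : the label i_j of the j-th edge of the path
   (j = 1, ..., k; other values are irrelevant). *)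
Variables (n : nat) (r : 'I_n -> nat) (D0 : 'I_n -> nat) (B : 'M[int]_n)
          (lab : nat -> 'I_n).

Definition posp (a : int) : int := Num.max a 0.

(* mutations of B_t and C_t in direction k (with the choice epsilon = +1,
   the result being independent of epsilon) *)
Definition mutB (k : 'I_n) (Bt : 'M[int]_n) : 'M[int]_n :=
  \matrix_(i, j) if (i == k) || (j == k) then - Bt i j
                 else Bt i j + (r k)%:Z * (posp (- Bt i k) * Bt k j + Bt i k * posp (Bt k j)).

Definition mutC (k : 'I_n) (Bt Ct : 'M[int]_n) : 'M[int]_n :=
  \matrix_(i, j) if j == k then - Ct i j
                 else Ct i j + (r k)%:Z * (Ct i k * posp (Bt k j) + posp (- Ct i k) * Bt k j).

(* seed j = (B_{t_j}, C_{t_j}) along the path t_0 -i_1- t_1 - ... *)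
Fixpoint seed (j : nat) : 'M[int]_n * 'M[int]_n :=
  match j with
  | 0 => (B, 1%:M)
  | j'.+1 => let s := seed j' in (mutB (lab j) s.1, mutC (lab j) s.1 s.2)
  end.

(* sign of a (sign-coherent) c-vector *)
Definition csgn (c : 'cV[int]_n) : int := if [forall i, 0 <= c i 0] then 1 else -1.
Definition cplus_of (c : 'cV[int]_n) : 'cV[int]_n := csgn c *: c.

(* c_j = c_{i_j; t_{j-1}}  (j >= 1), c_j^+, \hat c_j^+ = B c_j^+ *)
Definition cvec (j : nat) : 'cV[int]_n := col (lab j) (seed j.-1).2.
Definition cplus (j : nat) : 'cV[int]_n := cplus_of (cvec j).
Definition chat (j : nat) : 'cV[int]_n := B *m cplus j.

Definition toQ (c : 'cV[int]_n) : 'cV[rat]_n := map_mx (fun z : int => z%:~R) c.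
Definition dval (k : 'I_n) : rat := ((D0 k * r k)%:R)^-1.
Definition formDR (u v : 'cV[rat]_n) : rat := \sum_i u i 0 * (D0 i * r i)%:R * v i 0.
Definition expo (m j : nat) : rat := formDR (toQ (chat m)) (dval (lab j) *: toQ (cvec j)).

Definition Mz : nat := (\max_(i < n) r i).+1.
Definition Nv : nat := n + (n + n * Mz).
Definition K := {fraction {mpoly rat[Nv]}}.

Definition var (v : 'I_Nv) : K := @FracField.tofrac _ ('X_v : {mpoly rat[Nv]}).
Definition xK (i : 'I_n) : K := var (lshift (n + n * Mz) i).
Definition yK (i : 'I_n) : K := var (rshift n (lshift (n * Mz) i)).
(* z_{i,s}, with z_{i,0} = z_{i,r_i} = 1 and z_{i,s} = z_{i,r_i - s} *)
Definition zK (i : 'I_n) (s : nat) : K :=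
  if (s == 0%N) || (r i <= s)%N then 1
  else var (rshift n (rshift n (mxvec_index i (@inord (\max_(i < n) r i) (minn s (r i - s)))))).

(* power with a rational exponent (only ever used with integer exponents) *)
Definition qpow (F : K) (e : rat) : K := if denq e == 1 then F ^ numq e else 0.

Definition yhat (a : 'cV[int]_n) : K :=
  (\prod_i yK i ^ a i 0) * \prod_i xK i ^ (B *m a) i 0.

Definition Fpoly (k : 'I_n) (a : 'cV[int]_n) : K :=
  \sum_(s < (r k).+1) zK k s * yhat a ^+ s.

Definition subst (h : 'I_Nv -> K) (f : K) : K :=
  mmap (fun c : rat => @FracField.tofrac _ (c%:MP : {mpoly rat[Nv]})) h (\n_(repr f)) /
  mmap (fun c : rat => @FracField.tofrac _ (c%:MP : {mpoly rat[Nv]})) h (\d_(repr f)).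

(* q_{k;t}, where c = c_{k;t}: the automorphism of QP(x) over QP with
   x_i |-> x_i F^{-(e_i, d_k c)_{D_0 R}} (hence x^m |-> x^m F^{-(m, d_k c)}) *)
Definition qmap (k : 'I_n) (c : 'cV[int]_n) (f : K) : K :=
  subst (fun v => match split v with
                  | inl i => xK i * qpow (Fpoly k (cplus_of c))
                                      (- (dval k * (D0 i * r i)%:R * (c i 0)%:~R))
                  | inr _ => var v
                  end) f.

Definition qstep (j : nat) (f : K) : K := qmap (lab j) (cvec j) f.
Definition qcomp (i : nat) (f : K) : K := foldr qstep f (iota 1 i).

(* Ls l = [:: L_1; ...; L_l] *)
Fixpoint Ls (l : nat) : seq K :=
  match l with
  | 0 => [::]
  | l'.+1 => let p := Ls l' in
      rcons p (\sum_(s < (r (lab l)).+1) zK (lab l) s *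
                (yhat (cplus l) * \prod_(j < l') qpow (nth 0 p j) (- expo l j.+1)) ^+ s)
  end.
Definition Lv (j : nat) : K := nth 0 (Ls j) j.-1.

End GenCluster.

From HB Require Import structures.
From mathcomp Require Import all_boot all_order all_algebra.
From mathcomp Require Import fraction.
From mathcomp Require Import mpoly.
From mathcomp Require Import ring.
Import Order.TTheory GRing.Theory Num.Theory.
Local Open Scope ring_scope.
Set Implicit Arguments.
Unset Strict Implicit.
Unset Printing Implicit Defensive.

(* Let F_j = sum_s z_{i_j,s} (yhat^{c_j^+})^s.  The map q_{i_j;t_{j-1}} is the
   substitution x_i |-> x_i F_j^{e_i} with e_i = - D_i c_{i,j} / D_{i_j}
   (D = D_0 R), an integer because D C_t D^-1 stays integral under mutation.
   Skew-symmetry of D B gives sum_i e_i (B c_j^+)_i = 0, so the substitution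
   fixes yhat^{c_j^+}, hence F_j.  So x_i |-> x_i F_j^{-e_i} undoes it on
   polynomials, which makes it injective on polynomials: it extends to a
   field endomorphism mapping yhat^b to yhat^b F_j^{-(B b, d_{i_j} c_j)}.  The
   formula follows by induction on i: by the induction hypothesis for
   m = i + 1, q_{t_i}^{t_0} maps F_{i+1} to L_{i+1}. *)

Section RmorphPredicate.
Variable F : fieldType.

Definition is_rmorph (f : F -> F) := exists g : {rmorphism F -> F}, g =1 f.

Lemma zmod_monoid_is_rmorph (f : F -> F) :
  zmod_morphism f -> monoid_morphism f -> is_rmorph f.
Proof.
move=> fB fM.
by exists (HB.pack_for {rmorphism F -> F} f (GRing.isZmodMorphism.Build _ _ f fB)
                   (GRing.isMonoidMorphism.Build _ _ f fM)).
Qed.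

Lemma is_rmorph_id : is_rmorph id.
Proof. by exists idfun. Qed.

Lemma is_rmorph_comp (f g : F -> F) :
  is_rmorph f -> is_rmorph g -> is_rmorph (f \o g).
Proof. by move=> [f' f'E] [g' g'E]; exists (f' \o g')%FUN => x /=; rewrite f'E g'E. Qed.

Lemma eq_is_rmorph (f g : F -> F) : f =1 g -> is_rmorph f -> is_rmorph g.
Proof. by move=> fg [f' f'E]; exists f' => x; rewrite f'E fg. Qed.

End RmorphPredicate.

Lemma tofrac_repr (R : idomainType) (f : {fraction R}) :
  f = FracField.tofrac (\n_(repr f)) / FracField.tofrac (\d_(repr f)).
Proof.
have d_neq0 : FracField.tofrac (\d_(repr f)) != 0 by rewrite tofrac_eq0 denom_ratioP.
apply: (mulIf d_neq0); rewrite divfK //.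
rewrite -{1}[f]reprK; case: (repr f) => [[a b] /= b_neq0].
unlock FracField.tofrac; rewrite -[_ * _]FracField.pi_mul.
apply/eqmodP; rewrite /= FracField.equivfE /= /FracField.mulf /=.
by rewrite ?numer_Ratio ?denom_Ratio ?mulf_neq0 ?oner_eq0 //= !mulr1 mulrC.
Qed.

Section Substitution.
Variables (n : nat) (r : 'I_n -> nat).
Local Notation KK := (K r).
Local Notation MP := {mpoly rat[Nv r]}.
Local Notation tf := (@FracField.tofrac MP).

Definition ratK (c : rat) : KK := tf c%:MP.

Lemma ratK_zmod_morphism : zmod_morphism ratK.
Proof. by move=> x y; rewrite /ratK mpolyCB tofracB. Qed.
Lemma ratK_monoid_morphism : monoid_morphism ratK.
Proof. by split=> [|x y]; rewrite /ratK ?mpolyC1 ?tofrac1 // mpolyCM tofracM. Qed.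
HB.instance Definition _ := GRing.isZmodMorphism.Build rat KK ratK ratK_zmod_morphism.
HB.instance Definition _ := GRing.isMonoidMorphism.Build rat KK ratK ratK_monoid_morphism.

Definition eval (h : 'I_(Nv r) -> KK) : {rmorphism MP -> KK} := mmap ratK h.

Lemma eval_X (h : 'I_(Nv r) -> KK) v : eval h 'X_v = h v.
Proof. by rewrite /eval /= mmapX mmap1U. Qed.

Lemma substE (h : 'I_(Nv r) -> KK) f :
  subst h f = eval h (\n_(repr f)) / eval h (\d_(repr f)).
Proof. by []. Qed.

Lemma eval_C (h : 'I_(Nv r) -> KK) c : eval h c%:MP = tf c%:MP.
Proof. by rewrite /eval /= mmapC. Qed.

Lemma eq_subst (h h' : 'I_(Nv r) -> KK) f : h =1 h' -> subst h f = subst h' f.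
Proof.
move=> hh'; have evalE p : eval h p = eval h' p.
  by rewrite /eval /mmap; apply: eq_bigr => m _; rewrite (mmap1_eq _ hh').
by rewrite !substE !evalE.
Qed.

Lemma var_neq0 (v : 'I_(Nv r)) : var v != 0.
Proof.
rewrite tofrac_eq0; apply/eqP => X0.
by have := @mcoeffX _ rat U_(v)%MM U_(v)%MM; rewrite X0 mcoeff0 eqxx => /esym/eqP; rewrite oner_eq0.
Qed.

Section InjectiveEvaluation.
Variable h : 'I_(Nv r) -> KK.
Hypothesis eval_neq0 : forall p : MP, p != 0 -> eval h p != 0.

Lemma subst_frac (a b : MP) : b != 0 -> subst h (tf a / tf b) = eval h a / eval h b.
Proof.
move=> b_neq0; rewrite substE; set f := tf a / tf b.
have d_neq0 : \d_(repr f) != 0 by rewrite denom_ratioP.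
have cross : a * \d_(repr f) = \n_(repr f) * b.
  apply/eqP; rewrite -tofrac_eq !tofracM; apply/eqP.
  have := tofrac_repr f; rewrite -/f => /eqP.
  by rewrite eqr_div ?tofrac_eq0 // => /eqP.
by apply/eqP; rewrite eqr_div ?eval_neq0 // -!rmorphM cross.
Qed.

Lemma subst_tofrac (p : MP) : subst h (tf p) = eval h p.
Proof. by rewrite -[tf p]divr1 -tofrac1 subst_frac ?oner_neq0 // rmorph1 divr1. Qed.

Lemma subst_rmorph : is_rmorph (subst h).
Proof.
have fracP (x : KK) : exists a b, b != 0 /\ x = tf a / tf b.
  by exists \n_(repr x), \d_(repr x); rewrite denom_ratioP -tofrac_repr.
have subf_div (F : fieldType) (x y u v : F) :
    y != 0 -> v != 0 -> x / y - u / v = (x * v - u * y) / (y * v).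
  by move=> y0 v0; rewrite -mulNr addf_div // mulNr.
apply: zmod_monoid_is_rmorph => [x y|].
  have [a [b [b0 ->]]] := fracP x; have [c [d [d0 ->]]] := fracP y.
  rewrite subf_div ?tofrac_eq0 // -!tofracM -tofracB !subst_frac ?mulf_neq0 //.
  by rewrite subf_div ?eval_neq0 // rmorphB !rmorphM.
split=> [|x y]; first by rewrite -tofrac1 subst_tofrac rmorph1.
have [a [b [b0 ->]]] := fracP x; have [c [d [d0 ->]]] := fracP y.
by rewrite mulf_div -!tofracM !subst_frac ?mulf_neq0 // !rmorphM mulf_div.
Qed.

End InjectiveEvaluation.

Section InverseCriterion.
Variables h h' : 'I_(Nv r) -> KK.

(* [eval h p = a / s], and [h'] maps the fraction [a / s] back to [p]. *)
Definition cancel_at (p : MP) := exists a s : MP,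
  [/\ eval h' s != 0, eval h p * tf s = tf a & eval h' a = tf p * eval h' s].

Lemma cancel_atD p q : cancel_at p -> cancel_at q -> cancel_at (p + q).
Proof.
move=> [a [s [s0 e1 e2]]] [a' [s' [s0' e1' e2']]].
exists (a * s' + a' * s), (s * s'); split.
- rewrite rmorphM; exact: (mulf_neq0 s0 s0').
- by rewrite (rmorphD (eval h)) tofracD !tofracM -e1 -e1'; ring.
- by rewrite !(rmorphD (eval h')) !(rmorphM (eval h')) e2 e2' tofracD; ring.
Qed.

Lemma cancel_atM p q : cancel_at p -> cancel_at q -> cancel_at (p * q).
Proof.
move=> [a [s [s0 e1 e2]]] [a' [s' [s0' e1' e2']]].
exists (a * a'), (s * s'); split.
- rewrite rmorphM; exact: (mulf_neq0 s0 s0').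
- by rewrite (rmorphM (eval h)) !tofracM -e1 -e1'; ring.
- by rewrite !(rmorphM (eval h')) e2 e2' tofracM; ring.
Qed.

Lemma cancel_atC c : cancel_at c%:MP.
Proof.
exists c%:MP, 1; split; first by rewrite rmorph1; exact: oner_neq0.
  by rewrite tofrac1 mulr1 eval_C.
by rewrite rmorph1 mulr1 eval_C.
Qed.

Hypothesis cancel_atX : forall v, cancel_at 'X_v.

Lemma cancel_at_all p : cancel_at p.
Proof.
elim/mpolyind: p => [|c m p _ _ IHp]; first by rewrite -mpolyC0; apply: cancel_atC.
apply: cancel_atD => //; rewrite -mul_mpolyC; apply: cancel_atM; first exact: cancel_atC.
rewrite mpolyXE_id; apply: (big_ind cancel_at) => [||i _].
- by rewrite -mpolyC1; apply: cancel_atC.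
- exact: cancel_atM.
elim: (m i) => [|d IHd]; first by rewrite expr0 -mpolyC1; apply: cancel_atC.
by rewrite exprS; apply: cancel_atM.
Qed.

Lemma eval_neq0_of_cancel (p : MP) : p != 0 -> eval h p != 0.
Proof.
move=> p0; apply/eqP => hp0; have [a [s [s0 e1 e2]]] := cancel_at_all p.
move: e1; rewrite hp0 mul0r => /esym/eqP; rewrite tofrac_eq0 => /eqP a0.
move/eqP: e2; rewrite a0 rmorph0 eq_sym mulf_eq0 (negbTE s0) tofrac_eq0 orbF.
exact/negP.
Qed.

End InverseCriterion.
End Substitution.

Definition pospart (z : int) : nat := if z is Posz m then m else 0.
Definition negpart (z : int) : nat := if z is Negz m then m.+1 else 0.

Lemma expr_pospart (F : fieldType) (x : F) (z : int) :
  x != 0 -> x ^+ pospart z = x ^ z * x ^+ negpart z.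
Proof.
move=> x0; case: z => m /=; first by rewrite mulr1.
by rewrite -[x ^ Negz m]/((x ^+ m.+1)^-1) mulVf // expf_neq0.
Qed.

Lemma prod_exprz (F : fieldType) (x : F) (I : Type) (s : seq I) (E : I -> int) :
  x != 0 -> \prod_(i <- s) x ^ E i = x ^ (\sum_(i <- s) E i).
Proof. by move=> x0; rewrite (big_morph (exprz x) (fun m n => expfzDr m n x0) (expr0z x)). Qed.

Section MutationSubstitution.
Variables (n : nat) (r : 'I_n -> nat) (B : 'M[int]_n) (k : 'I_n) (a : 'cV[int]_n).
Local Notation KK := (K r).
Local Notation MP := {mpoly rat[Nv r]}.
Local Notation tf := (@FracField.tofrac MP).
Local Notation F := (Fpoly r B k a).
Local Notation xvar i := (lshift (n + n * Mz r) i : 'I_(Nv r)).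
Local Notation yvar i := (rshift n (lshift (n * Mz r) i) : 'I_(Nv r)).

Lemma split_xvar i : split (xvar i) = inl i.
Proof. exact: (unsplitK (inl i)). Qed.

Lemma split_rshift (w : 'I_(n + n * Mz r)) : split (rshift n w : 'I_(Nv r)) = inr w.
Proof. exact: (unsplitK (inr w)). Qed.

Definition monom (u : 'I_n -> 'I_(Nv r)) (E : 'I_n -> nat) : MP := \prod_i 'X_(u i) ^+ E i.

Lemma rmorph_monom (chi : {rmorphism MP -> KK}) u (E : 'I_n -> int) :
  (forall i, chi 'X_(u i) != 0) ->
  chi (monom u (pospart \o E)) = (\prod_i chi 'X_(u i) ^ E i) * chi (monom u (negpart \o E)).
Proof.
move=> chi_neq0; rewrite !rmorph_prod -big_split /=; apply: eq_bigr => i _.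
by rewrite !rmorphXn expr_pospart.
Qed.

Lemma rmorph_monom_neq0 (chi : {rmorphism MP -> KK}) u E :
  (forall i, chi 'X_(u i) != 0) -> chi (monom u E) != 0.
Proof.
move=> chi_neq0; rewrite rmorph_prod; apply/prodf_neq0 => i _.
by rewrite rmorphXn expf_neq0.
Qed.

(* [yhat r B a = yhat_num / yhat_den] and [F = Fpoly_num / yhat_den ^+ r k] *)
Definition yhat_num : MP :=
  monom (fun i => yvar i) (pospart \o (a^~ 0)) *
  monom (fun i => xvar i) (pospart \o ((B *m a)^~ 0)).
Definition yhat_den : MP :=
  monom (fun i => yvar i) (negpart \o (a^~ 0)) *
  monom (fun i => xvar i) (negpart \o ((B *m a)^~ 0)).
Definition zpoly (s : nat) : MP :=
  if (s == 0%N) || (r k <= s)%N then 1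
  else 'X_(rshift n (rshift n (mxvec_index k (@inord (\max_(i < n) r i) (minn s (r k - s)))))).
Definition Fpoly_num : MP := \sum_(s < (r k).+1) zpoly s * yhat_num ^+ s * yhat_den ^+ (r k - s).

Section FixingYhat.
Variables (chi : {rmorphism MP -> KK}) (g : 'I_n -> KK).
Hypothesis chi_rshift : forall w, chi 'X_(rshift n w) = var (rshift n w : 'I_(Nv r)).
Hypothesis chi_xvar : forall i, chi 'X_(xvar i) = g i.
Hypothesis g_neq0 : forall i, g i != 0.
Hypothesis g_yhat : \prod_i g i ^ (B *m a) i 0 = \prod_i xK r i ^ (B *m a) i 0.

Let chi_yvar_neq0 i : chi 'X_(yvar i) != 0.
Proof. by rewrite chi_rshift; apply: var_neq0. Qed.

Let chi_xvar_neq0 i : chi 'X_(xvar i) != 0.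
Proof. by rewrite chi_xvar; apply: g_neq0. Qed.

Lemma rmorph_yhat_den_neq0 : chi yhat_den != 0.
Proof.
rewrite rmorphM; apply: mulf_neq0; apply: rmorph_monom_neq0.
  exact: chi_yvar_neq0.
exact: chi_xvar_neq0.
Qed.

Lemma rmorph_yhat_num : chi yhat_num = yhat r B a * chi yhat_den.
Proof.
rewrite !rmorphM (rmorph_monom _ chi_yvar_neq0) (rmorph_monom _ chi_xvar_neq0).
have -> : \prod_i chi 'X_(yvar i) ^ a i 0 = \prod_i yK r i ^ a i 0.
  by apply: eq_bigr => i _; rewrite chi_rshift.
have -> : \prod_i chi 'X_(xvar i) ^ (B *m a) i 0 = \prod_i xK r i ^ (B *m a) i 0.
  by rewrite -g_yhat; apply: eq_bigr => i _; rewrite chi_xvar.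
by rewrite /yhat; ring.
Qed.

Lemma rmorph_Fpoly_num : chi Fpoly_num = chi yhat_den ^+ r k * F.
Proof.
rewrite rmorph_sum /Fpoly mulr_sumr; apply: eq_bigr => s _.
have s_le : (s <= r k)%N by rewrite -ltnS.
have -> : chi yhat_den ^+ r k = chi yhat_den ^+ s * chi yhat_den ^+ (r k - s).
  by rewrite -exprD subnKC.
rewrite 2!rmorphM !rmorphXn rmorph_yhat_num exprMn.
have -> : chi (zpoly s) = zK r k s.
  by rewrite /zpoly /zK; case: ifP => _; [rewrite rmorph1 | rewrite chi_rshift].
ring.
Qed.

End FixingYhat.

Lemma Fpoly_num_neq0 : Fpoly_num != 0.
Proof.
pose ev : {rmorphism MP -> rat} := meval (fun _ => 1).
have evX v : ev 'X_v = 1 by exact: mevalXU.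
have ev_monom u E : ev (monom u E) = 1.
  by rewrite rmorph_prod; apply: big1 => i _; rewrite rmorphXn evX expr1n.
apply/eqP => /(congr1 ev); rewrite rmorph0 rmorph_sum (eq_bigr (fun _ => 1)) => [|s _].
  by rewrite sumr_const card_ord => /eqP; rewrite pnatr_eq0.
rewrite /yhat_num /yhat_den !rmorphM !rmorphXn !rmorphM !ev_monom !expr1n !mulr1.
by rewrite /zpoly; case: ifP => _; rewrite ?rmorph1 ?evX.
Qed.

Lemma tofrac_Fpoly_num : tf Fpoly_num = tf yhat_den ^+ r k * F.
Proof.
exact: (rmorph_Fpoly_num (g := xK r) (fun w => erefl) (fun i => erefl) (fun i => var_neq0 _) erefl).
Qed.

Lemma Fpoly_neq0 : F != 0.
Proof.
apply/eqP => F0.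
have := tofrac_Fpoly_num; rewrite F0 mulr0 => /eqP; rewrite tofrac_eq0.
by apply/negP; exact: Fpoly_num_neq0.
Qed.

Definition xscale (e : 'I_n -> int) (v : 'I_(Nv r)) : KK :=
  match split v with inl i => xK r i * F ^ e i | inr _ => var v end.

Lemma eval_xscale_xvar e i : eval (xscale e) 'X_(xvar i) = xK r i * F ^ e i.
Proof. by rewrite eval_X /xscale split_xvar. Qed.

Lemma eval_xscale_rshift e w : eval (xscale e) 'X_(rshift n w) = var (rshift n w : 'I_(Nv r)).
Proof. by rewrite eval_X /xscale split_rshift. Qed.

Lemma prod_xscale (e : 'I_n -> int) (b : 'cV[int]_n) :
  \prod_i (xK r i * F ^ e i) ^ (B *m b) i 0 =
  (\prod_i xK r i ^ (B *m b) i 0) * F ^ (\sum_i e i * (B *m b) i 0).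
Proof.
rewrite -(prod_exprz _ _ Fpoly_neq0) -big_split /=; apply: eq_bigr => i _.
by rewrite expfzMl exprz_exp.
Qed.

Section ScalingFixesYhat.
Variable e : 'I_n -> int.
Hypothesis e_orth : \sum_i e i * (B *m a) i 0 = 0.

Let xscale_neq0 i : xK r i * F ^ e i != 0.
Proof. exact: mulf_neq0 (var_neq0 _) (expfz_neq0 _ Fpoly_neq0). Qed.

Let xscale_yhat : \prod_i (xK r i * F ^ e i) ^ (B *m a) i 0 = \prod_i xK r i ^ (B *m a) i 0.
Proof. by rewrite prod_xscale e_orth expr0z mulr1. Qed.

Lemma eval_xscale_yhat_den_neq0 : eval (xscale e) yhat_den != 0.
Proof. exact: rmorph_yhat_den_neq0 (eval_xscale_rshift e) (eval_xscale_xvar e) xscale_neq0. Qed.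

Lemma eval_xscale_Fpoly_num :
  eval (xscale e) Fpoly_num = eval (xscale e) yhat_den ^+ r k * F.
Proof.
exact: rmorph_Fpoly_num (eval_xscale_rshift e) (eval_xscale_xvar e) xscale_neq0 xscale_yhat.
Qed.

End ScalingFixesYhat.

Section ScalingAutomorphism.
Variable e : 'I_n -> int.
Hypothesis e_orth : \sum_i e i * (B *m a) i 0 = 0.

Lemma cancel_at_xscale (v : 'I_(Nv r)) : cancel_at (xscale e) (xscale (fun i => - e i)) 'X_v.
Proof.
have eN_orth : \sum_i - e i * (B *m a) i 0 = 0.
  rewrite (eq_bigr (fun i => - (e i * (B *m a) i 0))) => [|i _].
    by rewrite sumrN e_orth oppr0.
  exact: mulNr.
case Ev: (split v) => [i|w]; last first.
  exists 'X_v, 1; split; first by rewrite rmorph1; exact: oner_neq0.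
    by rewrite tofrac1 mulr1 eval_X /xscale Ev.
  by rewrite rmorph1 mulr1 eval_X /xscale Ev.
have -> : v = xvar i by rewrite -(splitK v) Ev.
have xE : tf 'X_(xvar i) = xK r i by [].
have Fp := expr_pospart (e i) Fpoly_neq0.
have Fq : F ^+ negpart (e i) = F ^ (- e i) * F ^+ pospart (e i).
  by rewrite Fp mulrA -expfzDr ?Fpoly_neq0 // addNr expr0z mul1r.
exists ('X_(xvar i) * Fpoly_num ^+ pospart (e i) * (yhat_den ^+ r k) ^+ negpart (e i)).
exists ((yhat_den ^+ r k) ^+ pospart (e i) * Fpoly_num ^+ negpart (e i)); split.
- rewrite !rmorphM !rmorphXn (eval_xscale_Fpoly_num eN_orth); apply: mulf_neq0.
    do 2!apply: expf_neq0; exact: eval_xscale_yhat_den_neq0.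
  apply/expf_neq0/mulf_neq0; last exact: Fpoly_neq0.
  apply: expf_neq0; exact: eval_xscale_yhat_den_neq0.
- rewrite eval_xscale_xvar !tofracM !tofracXn tofrac_Fpoly_num xE !exprMn Fp; ring.
- rewrite !rmorphM !rmorphXn (eval_xscale_Fpoly_num eN_orth) eval_xscale_xvar xE !exprMn Fq; ring.
Qed.

Lemma eval_xscale_neq0 (p : MP) : p != 0 -> eval (xscale e) p != 0.
Proof. exact: (eval_neq0_of_cancel cancel_at_xscale). Qed.

Lemma xscale_rmorph : is_rmorph (subst (xscale e)).
Proof. exact: subst_rmorph eval_xscale_neq0. Qed.

Lemma subst_xscale_var v : subst (xscale e) (var v) = xscale e v.
Proof. by rewrite (subst_tofrac eval_xscale_neq0) eval_X. Qed.

Lemma subst_xscale_yhat (b : 'cV[int]_n) :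
  subst (xscale e) (yhat r B b) = yhat r B b * F ^ (\sum_i e i * (B *m b) i 0).
Proof.
have [g gE] := xscale_rmorph.
have g_var v : g (var v) = xscale e v by rewrite gE subst_xscale_var.
have gy i : g (yK r i ^ b i 0) = yK r i ^ b i 0.
  by rewrite fmorphXz g_var /xscale split_rshift.
have gx i : g (xK r i ^ (B *m b) i 0) = (xK r i * F ^ e i) ^ (B *m b) i 0.
  by rewrite fmorphXz g_var /xscale split_xvar.
rewrite -gE /yhat rmorphM !rmorph_prod.
by rewrite (eq_bigr _ (fun i _ => gy i)) (eq_bigr _ (fun i _ => gx i)) prod_xscale mulrA.
Qed.

End ScalingAutomorphism.
End MutationSubstitution.

Lemma mulr_posp (d x : int) : 0 <= d -> d * posp x = posp (d * x).
Proof. by move=> d0; rewrite /posp maxr_pMr // mulr0. Qed.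

Section MutationInvariants.
Variables (n : nat) (r D0 : 'I_n -> nat).
Local Notation Dz i := ((D0 i * r i)%N%:Z).

Definition D_skew (Bt : 'M[int]_n) := forall i j, Dz i * Bt i j = - (Dz j * Bt j i).

Definition D_conj_integral (Ct : 'M[int]_n) :=
  exists C' : 'M[int]_n, forall i j, Dz i * Ct i j = C' i j * Dz j.

Lemma mutB_skew k Bt : D_skew Bt -> D_skew (mutB r k Bt).
Proof.
move=> skew i j; rewrite !mxE [(j == k) || _]orbC.
case: ((i == k) || (j == k)); first by rewrite !mulrN skew opprK.
have posp_ik : Dz i * posp (- Bt i k) = Dz k * posp (Bt k i).
  by rewrite mulr_posp // mulrN skew opprK -mulr_posp.
have posp_jk : Dz j * posp (- Bt j k) = Dz k * posp (Bt k j).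
  by rewrite mulr_posp // mulrN skew opprK -mulr_posp.
have -> : Dz i * (Bt i j + (r k)%:Z * (posp (- Bt i k) * Bt k j + Bt i k * posp (Bt k j))) =
    Dz i * Bt i j +
    (r k)%:Z * ((Dz i * posp (- Bt i k)) * Bt k j + (Dz i * Bt i k) * posp (Bt k j)).
  by ring.
have -> : Dz j * (Bt j i + (r k)%:Z * (posp (- Bt j k) * Bt k i + Bt j k * posp (Bt k i))) =
    Dz j * Bt j i +
    (r k)%:Z * ((Dz j * posp (- Bt j k)) * Bt k i + (Dz j * Bt j k) * posp (Bt k i)).
  by ring.
rewrite posp_ik posp_jk (skew i k) (skew j k) (skew i j); ring.
Qed.

Lemma mutC_conj_integral k Bt Ct :
  D_skew Bt -> D_conj_integral Ct -> D_conj_integral (mutC r k Bt Ct).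
Proof.
move=> skew [C' C'E].
exists (\matrix_(i, j) if j == k then - C' i j
   else C' i j + (r k)%:Z * (C' i k * posp (- Bt j k) + posp (- C' i k) * (- Bt j k))).
move=> i j; rewrite !mxE; case: (j == k); first by rewrite mulrN C'E mulNr.
have posp_ik : Dz i * posp (- Ct i k) = posp (- C' i k) * Dz k.
  by rewrite [RHS]mulrC !mulr_posp // !mulrN C'E (mulrC (C' i k)).
have posp_kj : Dz k * posp (Bt k j) = Dz j * posp (- Bt j k).
  by rewrite !mulr_posp // mulrN skew.
have -> : Dz i * (Ct i j + (r k)%:Z * (Ct i k * posp (Bt k j) + posp (- Ct i k) * Bt k j)) =
    Dz i * Ct i j +
    (r k)%:Z * ((Dz i * Ct i k) * posp (Bt k j) + (Dz i * posp (- Ct i k)) * Bt k j).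
  by ring.
rewrite C'E C'E posp_ik.
have -> : C' i j * Dz j +
      (r k)%:Z * (C' i k * Dz k * posp (Bt k j) + posp (- C' i k) * Dz k * Bt k j) =
    C' i j * Dz j +
      (r k)%:Z * (C' i k * (Dz k * posp (Bt k j)) + posp (- C' i k) * (Dz k * Bt k j)).
  by ring.
rewrite posp_kj (skew k j); ring.
Qed.

Lemma D_skew_quadratic (Bt : 'M[int]_n) (c : 'cV[int]_n) :
  D_skew Bt -> \sum_i Dz i * c i 0 * (Bt *m c) i 0 = 0.
Proof.
move=> skew; set S := \sum_i _.
have S_double : S = \sum_i \sum_l Dz i * Bt i l * (c i 0 * c l 0).
  by apply: eq_bigr => i _; rewrite mxE mulr_sumr; apply: eq_bigr => l _; ring.
have S_opp : S = - S.
  rewrite {1}S_double exchange_big /= S_double -sumrN; apply: eq_bigr => l _.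
  by rewrite -sumrN; apply: eq_bigr => i _; rewrite skew mulNr (mulrC (c i 0)).
have : S *+ 2 == 0 by rewrite mulr2n {1}S_opp addNr.
by rewrite mulrn_eq0 => /eqP.
Qed.

Variables (B : 'M[int]_n) (lab : nat -> 'I_n).
Hypothesis B_skew : D_skew B.

Lemma seed_skew t : D_skew (seed r B lab t).1.
Proof. by elim: t => [|t IH] //=; apply: mutB_skew. Qed.

Lemma seed_conj_integral t : D_conj_integral (seed r B lab t).2.
Proof.
elim: t => [|t IH] /=; last by apply: mutC_conj_integral => //; apply: seed_skew.
exists 1%:M => i j; rewrite !mxE; case: eqP => [->|_].
  by rewrite mulr1 mul1r.
by rewrite mulr0 mul0r.
Qed.

End MutationInvariants.

Lemma qpow_int n (r : 'I_n -> nat) (F : K r) (z : int) : qpow F z%:~R = F ^ z.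
Proof. by rewrite /qpow denq_int eqxx numq_int. Qed.

Lemma rmorph_qpow n (r : 'I_n -> nat) (g : {rmorphism K r -> K r}) (F : K r) e :
  g (qpow F e) = qpow (g F) e.
Proof. by rewrite /qpow; case: ifP => _; [exact: fmorphXz | exact: rmorph0]. Qed.

Section PathSubstitution.
Variables (n : nat) (r D0 : 'I_n -> nat) (B : 'M[int]_n) (lab : nat -> 'I_n).
Local Notation Dz i := ((D0 i * r i)%N%:Z).
Hypothesis r_gt0 : forall i, (0 < r i)%N.
Hypothesis D0_gt0 : forall i, (0 < D0 i)%N.
Hypothesis B_skew : D_skew r D0 B.

Local Notation c j := (cvec r B lab j).
Local Notation cp j := (cplus r B lab j).
Local Notation Fstep j := (Fpoly r B (lab j) (cp j)).
Local Notation qs := (@qstep n r D0 B lab).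
Local Notation qc := (@qcomp n r D0 B lab).

Lemma D_neq0 i : (D0 i * r i)%N != 0%N.
Proof. by rewrite muln_eq0 negb_or -!lt0n D0_gt0 r_gt0. Qed.

Lemma qstep_exponent j : exists2 e : 'I_n -> int,
  \sum_i e i * (B *m cp j) i 0 = 0 &
  forall i, (e i)%:~R = - (dval r D0 (lab j) * (D0 i * r i)%:R * (c j i 0)%:~R).
Proof.
have [C' C'E] := seed_conj_integral lab B_skew j.-1.
set k := lab j.
have cE i : Dz i * c j i 0 = C' i k * Dz k by rewrite mxE C'E.
exists (fun i => - C' i k) => [|i].
  have orth_c : \sum_i - C' i k * (B *m c j) i 0 = 0.
    apply: (mulIf (D_neq0 k : Dz k != 0)); rewrite mul0r mulr_suml.
    rewrite (eq_bigr (fun i => - (Dz i * c j i 0 * (B *m c j) i 0))) => [|i _].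
      by rewrite sumrN D_skew_quadratic ?oppr0.
    by rewrite cE; ring.
  rewrite /cplus /cplus_of -scalemxAr (eq_bigr (fun i => csgn (c j) * (- C' i k * (B *m c j) i 0))).
    by rewrite -mulr_sumr orth_c mulr0.
  by move=> i _; rewrite mxE; ring.
have cQ : ((D0 i * r i)%:R * (c j i 0)%:~R : rat) = (C' i k)%:~R * (D0 k * r k)%:R.
  by have := congr1 (fun z : int => z%:~R : rat) (cE i); rewrite /= !intrM.
by rewrite /dval -mulrA cQ mulrCA mulVf ?mulr1 ?intrN // pnatr_eq0 D_neq0.
Qed.

Section Exponent.
Variables (j : nat) (e : 'I_n -> int).
Hypothesis eE : forall i, (e i)%:~R = - (dval r D0 (lab j) * (D0 i * r i)%:R * (c j i 0)%:~R).

Lemma qstep_xscale : qs j =1 subst (xscale B (lab j) (cp j) e).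
Proof.
move=> f; apply: eq_subst => v; rewrite /xscale.
by case: (split v) => [i|w] //; rewrite -qpow_int eE.
Qed.

Lemma formDR_exponent (b : 'cV[int]_n) :
  - formDR r D0 (toQ (B *m b)) (dval r D0 (lab j) *: toQ (c j)) =
  (\sum_i e i * (B *m b) i 0)%:~R.
Proof.
rewrite /formDR (big_morph (fun z : int => z%:~R : rat) (@intrD _) (mulr0z _)) -sumrN.
by apply: eq_bigr => i _; rewrite intrM eE !mxE; ring.
Qed.

End Exponent.

Lemma qstep_rmorph j : is_rmorph (qs j).
Proof.
have [e e_orth eE] := qstep_exponent j.
apply: (@eq_is_rmorph _ (subst (xscale B (lab j) (cp j) e))).
  by move=> f; rewrite (qstep_xscale eE).
exact: xscale_rmorph.
Qed.

Lemma qstep_yhat j (b : 'cV[int]_n) :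
  qs j (yhat r B b) =
  yhat r B b * qpow (Fstep j) (- formDR r D0 (toQ (B *m b)) (dval r D0 (lab j) *: toQ (c j))).
Proof.
have [e e_orth eE] := qstep_exponent j.
by rewrite (qstep_xscale eE) subst_xscale_yhat // (formDR_exponent eE) qpow_int.
Qed.

Lemma qstep_rshift j (w : 'I_(n + n * Mz r)) :
  qs j (var (rshift n w : 'I_(Nv r))) = var (rshift n w : 'I_(Nv r)).
Proof.
have [e e_orth eE] := qstep_exponent j.
by rewrite (qstep_xscale eE) subst_xscale_var // /xscale split_rshift.
Qed.

Lemma qcompS i f : qc i.+1 f = qc i (qs i.+1 f).
Proof.
have iotaS : iota 1 i.+1 = iota 1 i ++ [:: i.+1].
  by rewrite -[i.+1]addn1 iotaD add1n addn1.
by rewrite /qcomp iotaS foldr_cat.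
Qed.

Lemma qcomp_rmorph i : is_rmorph (qc i).
Proof.
elim: i => [|i IH]; first exact: is_rmorph_id.
exact: eq_is_rmorph (fun f => esym (qcompS i f)) (is_rmorph_comp IH (qstep_rmorph i.+1)).
Qed.

Lemma qcomp_zK i k s : qc i (zK r k s) = zK r k s.
Proof.
rewrite /zK; case: ifP => _.
  by have [g <-] := qcomp_rmorph i; rewrite rmorph1.
by elim: i => [|i IH] //; rewrite qcompS qstep_rshift.
Qed.

Lemma Lv_S l : Lv r D0 B lab l.+1 =
  \sum_(s < (r (lab l.+1)).+1) zK r (lab l.+1) s *
     (yhat r B (cp l.+1) *
      \prod_(j < l) qpow (Lv r D0 B lab j.+1) (- expo r D0 B lab l.+1 j.+1)) ^+ s.
Proof.
have size_Ls m : size (Ls r D0 B lab m) = m.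
  by elim: m => [|m IH] //=; rewrite size_rcons IH.
have nth_Ls m j : (j < m)%N -> nth 0 (Ls r D0 B lab m) j = Lv r D0 B lab j.+1.
  elim: m => [|m IH] //; rewrite ltnS leq_eqVlt => /orP [/eqP -> //|lt_jm].
  by rewrite /= nth_rcons size_Ls lt_jm IH.
rewrite {1}/Lv /= nth_rcons size_Ls ltnn eqxx.
apply: eq_bigr => s _; congr (_ * (_ * _) ^+ _).
by apply: eq_bigr => j _; rewrite nth_Ls.
Qed.

Lemma qcomp_yhat i m : (i <= m)%N ->
  qc i (yhat r B (cp m)) =
  yhat r B (cp m) * \prod_(1 <= j < i.+1) qpow (Lv r D0 B lab j) (- expo r D0 B lab m j).
Proof.
elim: i m => [|i IH] m le_im; first by rewrite big_geq // mulr1.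
have [g gE] := qcomp_rmorph i.
have F_Lv : qc i (Fstep i.+1) = Lv r D0 B lab i.+1.
  rewrite Lv_S -gE rmorph_sum; apply: eq_bigr => s _.
  rewrite rmorphM rmorphXn !gE qcomp_zK (IH i.+1 (leqnSn i)).
  by rewrite big_add1 /= big_mkord.
rewrite qcompS qstep_yhat -gE rmorphM rmorph_qpow !gE (IH m (ltnW le_im)) F_Lv.
by rewrite -mulrA (big_nat_recr i.+1).
Qed.

End PathSubstitution.

Theorem lemmaL3 (n : nat) (r D0 : 'I_n -> nat) (B : 'M[int]_n)
  (k : nat) (lab : nat -> 'I_n) :
  (0 < n)%N ->
  (forall i, (0 < r i)%N) ->
  (forall i, (0 < D0 i)%N) ->
  (forall i j, (D0 i * r i)%:Z * B i j = - ((D0 j * r j)%:Z * B j i)) ->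
  forall i m : nat, (1 <= i <= k)%N -> (i <= m <= k)%N ->
    @qcomp n r D0 B lab i (@yhat n r B (@cplus n r B lab m)) =
    @yhat n r B (@cplus n r B lab m) *
      \prod_(1 <= j < i.+1)
         @qpow n r (@Lv n r D0 B lab j) (- @expo n r D0 B lab m j).
Proof.
move=> _ r_gt0 D0_gt0 B_skew i m _ /andP [le_im _].
exact: qcomp_yhat.
Qed.
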